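(* Let $V\in\mathbb{R}^{\ell\times m}$ have rows $v_1,\dots,v_\ell\in\mathbb{R}^m$ and columns $v_{*1},\dots,v_{*m}\in\mathbb{R}^\ell$. Suppose $\|v_i\|_2=1$ for all $i\in[\ell]$, and let $\theta\ge 0$ satisfy $\theta\|v_{*j}\|_1\le 1/3$ for all $j\in[m]$. Then for every $\mu=(\mu_1,\dots,\mu_\ell)\in\mathbb{R}^\ell$ there exists $y\in\mathbb{R}^m$ with $\|y\|_\infty\le 1/3$ and \[|\langle v_i,y\rangle-\mu_i|\ge\theta\quad\text{for all } i\in[\ell].\] *)

From mathcomp Require Import all_boot all_order all_algebra.
From mathcomp Require Import reals.
Set Implicit Arguments. Unset Strict Implicit. Unset Printing Implicit Defensive.
Import Order.TTheory GRing.Theory Num.Theory.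
Local Open Scope ring_scope.

Definition row_norm2 (R : realType) l m (V : 'M[R]_(l, m)) (i : 'I_l) : R :=
  Num.sqrt (\sum_(j < m) V i j ^+ 2).

Definition col_norm1 (R : realType) l m (V : 'M[R]_(l, m)) (j : 'I_m) : R :=
  \sum_(i < l) `|V i j|.

Definition sup_norm (R : realType) m (y : 'I_m -> R) : R :=
  \big[Num.max/0]_(j < m) `|y j|.

Definition row_dot (R : realType) l m (V : 'M[R]_(l, m)) (i : 'I_l) (y : 'I_m -> R) : R :=
  \sum_(j < m) V i j * y j.

From mathcomp Require Import all_boot all_order all_algebra.
From mathcomp Require Import reals.
From mathcomp Require Import ring lra.
Set Implicit Arguments. Unset Strict Implicit. Unset Printing Implicit Defensive.
Import Order.TTheory GRing.Theory Num.Theory.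
Local Open Scope ring_scope.

(* For a sign pattern s in {-1,1}^l put  y_s = theta * sum_i s_i v_i.  By the
   column condition every coordinate satisfies |y_s j| <= theta ||v_{*j}||_1
   <= 1/3, whatever s is.  To get the separation, maximise over the finitely
   many sign patterns the potential
        Phi(s) = ||y_s||_2^2 - 2 theta <s, mu>.
   Flipping the single sign s_k changes Phi by
        -4 theta s_k (<v_k, y_s> - mu_k) + 4 theta^2 ||v_k||_2^2,
   so maximality of s together with ||v_k||_2 = 1 forces
        theta^2 <= theta s_k (<v_k, y_s> - mu_k) <= theta |<v_k, y_s> - mu_k|,
   which is the claim when theta > 0 (and trivial when theta = 0). *)

Definition sgn (R : pzRingType) (b : bool) : R := (-1) ^+ b.

Lemma sgnK (R : pzRingType) (b : bool) : sgn R b * sgn R b = 1.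
Proof. by case: b; rewrite /sgn ?expr1 ?expr0 ?mulrNN mulr1. Qed.

Lemma norm_sgn (R : numDomainType) (b : bool) : `|sgn R b| = 1.
Proof. by case: b; rewrite /sgn ?expr1 ?expr0 ?normrN normr1. Qed.

Lemma sgn_neg (R : pzRingType) (b : bool) : sgn R (~~ b) = - sgn R b.
Proof. by case: b; rewrite /sgn ?expr1 ?expr0 ?opprK. Qed.

Definition flip (I : finType) (e : {ffun I -> bool}) (k : I) : {ffun I -> bool} :=
  [ffun i => if i == k then ~~ e i else e i].

Lemma signed_sum_flip (R : comPzRingType) (I : finType) (e : {ffun I -> bool})
    (k : I) (F : I -> R) :
  \sum_i sgn R (flip e k i) * F i = \sum_i sgn R (e i) * F i - 2 * sgn R (e k) * F k.
Proof.
rewrite (bigD1 k) //= [in RHS](bigD1 k) //= ffunE eqxx sgn_neg.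
rewrite (eq_bigr (fun i => sgn R (e i) * F i)); first by ring.
by move=> i /negbTE ik; rewrite ffunE ik.
Qed.

Lemma sup_norm_le (R : realType) m (y : 'I_m -> R) (c : R) :
  0 <= c -> (forall j, `|y j| <= c) -> sup_norm y <= c.
Proof.
move=> c_ge0 yc; rewrite /sup_norm; elim/big_ind: _ => // a b ac bc.
by rewrite ge_max ac bc.
Qed.

Lemma row_norm2_sqr (R : realType) l m (V : 'M[R]_(l, m)) (i : 'I_l) :
  row_norm2 V i = 1 -> \sum_j V i j ^+ 2 = 1.
Proof.
rewrite /row_norm2 => h.
rewrite -(@sqr_sqrtr _ (\sum_j V i j ^+ 2)) ?h ?expr1n //.
by apply: sumr_ge0 => j _; apply: sqr_ge0.
Qed.

Section SignedCombination.
Variables (R : realType) (l m : nat) (V : 'M[R]_(l, m)) (theta : R).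
Hypothesis theta_ge0 : 0 <= theta.

Definition combo (e : {ffun 'I_l -> bool}) (j : 'I_m) : R :=
  theta * \sum_i sgn R (e i) * V i j.

Lemma norm_combo e j : `|combo e j| <= theta * col_norm1 V j.
Proof.
rewrite /combo normrM ger0_norm // ler_wpM2l //.
apply: le_trans (ler_norm_sum _ _ _) _.
by apply: ler_sum => i _; rewrite normrM norm_sgn mul1r.
Qed.

Lemma combo_flip e k j :
  combo (flip e k) j = combo e j - 2 * theta * sgn R (e k) * V k j.
Proof. by rewrite /combo signed_sum_flip; ring. Qed.

Variable mu : 'I_l -> R.

Definition potential (e : {ffun 'I_l -> bool}) : R :=
  \sum_j combo e j ^+ 2 - 2 * theta * \sum_i sgn R (e i) * mu i.

Lemma potential_flip e k :
  potential (flip e k) = potential e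
    - 4 * theta * sgn R (e k) * (row_dot V k (combo e) - mu k)
    + 4 * theta ^+ 2 * \sum_j V k j ^+ 2.
Proof.
rewrite /potential signed_sum_flip.
under eq_bigr => j _ do rewrite combo_flip.
have expand j : (combo e j - 2 * theta * sgn R (e k) * V k j) ^+ 2 =
    combo e j ^+ 2 - 4 * theta * sgn R (e k) * (V k j * combo e j)
    + 4 * theta ^+ 2 * (sgn R (e k) * sgn R (e k)) * V k j ^+ 2 by ring.
under eq_bigr => j _ do rewrite expand sgnK mulr1.
rewrite big_split /= sumrB -!mulr_sumr /row_dot; ring.
Qed.

Lemma separated_at_local_max e k :
  \sum_j V k j ^+ 2 = 1 -> potential (flip e k) <= potential e ->
  theta <= `|row_dot V k (combo e) - mu k|.
Proof.
move=> unit_k; rewrite potential_flip unit_k mulr1 => no_gain.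
have key : theta * theta <= theta * (sgn R (e k) * (row_dot V k (combo e) - mu k)).
  by move: no_gain; rewrite expr2; lra.
have [->|theta_neq0] := eqVneq theta 0; first by [].
have theta_gt0 : 0 < theta by rewrite lt_def theta_neq0 theta_ge0.
rewrite ler_pM2l // in key; apply: le_trans key _.
by apply: le_trans (ler_norm _) _; rewrite normrM norm_sgn mul1r.
Qed.

End SignedCombination.

Theorem mainTheorem4 (R : realType) (l m : nat) (V : 'M[R]_(l, m)) (theta : R) :
  (forall i : 'I_l, row_norm2 V i = 1) ->
  0 <= theta ->
  (forall j : 'I_m, theta * col_norm1 V j <= 1 / 3) ->
  forall mu : 'I_l -> R,
  exists y : 'I_m -> R,
    sup_norm y <= 1 / 3 /\
    (forall i : 'I_l, theta <= `|row_dot V i y - mu i|).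
Proof.
move=> unit_rows theta_ge0 col_bound mu.
have [e _ e_max] :=
  @arg_maxP _ R _ [ffun=> false] xpredT (potential V theta mu) isT.
exists (combo V theta e); split.
  apply: sup_norm_le => [|j]; first lra.
  exact: le_trans (norm_combo V theta_ge0 e j) (col_bound j).
move=> k; apply: separated_at_local_max => //.
- exact: row_norm2_sqr.
- exact: e_max.
Qed.
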